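(* Let $0<\alpha<\beta<1$ and let $t\geq 1$ be an integer. Let $\mathcal{P}_t'$ denote the set of real polynomials $f$ of degree at most $t$ satisfying $f(0)=0$ and $f(1)=1$. Then the minimization problem \[ \min_{f\in\mathcal{P}_t'} \frac{\max_{\lambda\in[0,\alpha]}|f(\lambda)|}{\min_{\lambda\in[\beta,1]}|f(\lambda)|} \] is solved by \[ f_t^\star(\lambda)=\prod_{s=0}^{t-1}\frac{\lambda-r_{s,t}}{1-r_{s,t}},\qquad r_{s,t}:=\alpha\,\frac{\cos\!\big(\frac{\pi(s+1/2)}{t}\big)+\cos\!\big(\frac{\pi}{2t}\big)}{1+\cos\!\big(\frac{\pi}{2t}\big)} . \]
   Context: The objective is taken to be $+\infty$ when the denominator vanishes. The polynomial $f_t^\star$ is an affinely reparametrized Chebyshev polynomial of the first kind of degree $t$; note $r_{t-1,t}=0$. *)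

From HB Require Import structures.
From mathcomp Require Import all_boot all_order all_algebra.
From mathcomp Require Import all_classical all_reals all_analysis.
Set Implicit Arguments. Unset Strict Implicit. Unset Printing Implicit Defensive.
Import Order.TTheory GRing.Theory Num.Theory.
Local Open Scope classical_set_scope.
Local Open Scope ring_scope.

Definition Pt' (R : realType) (t : nat) (f : {poly R}) : Prop :=
  (size f <= t.+1)%N /\ f.[0] = 0 /\ f.[1] = 1.

(* max_{lambda in [a,b]} |f(lambda)| (a sup; attained by continuity) *)
Definition max_abs_on (R : realType) (f : {poly R}) (a b : R) : R :=
  sup [set `|f.[x]| | x in `[a, b]].

Definition min_abs_on (R : realType) (f : {poly R}) (a b : R) : R :=
  inf [set `|f.[x]| | x in `[a, b]].

Definition objective (R : realType) (alpha beta : R) (f : {poly R}) : \bar R :=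
  if min_abs_on f beta 1 == 0 then +oo%E
  else ((max_abs_on f 0 alpha) / (min_abs_on f beta 1))%:E.

Definition r_st (R : realType) (alpha : R) (t s : nat) : R :=
  alpha * (cos (pi * (s%:R + 2^-1) / t%:R) + cos (pi / (2 * t%:R)))
        / (1 + cos (pi / (2 * t%:R))).

Definition fstar (R : realType) (alpha : R) (t : nat) : {poly R} :=
  \prod_(s < t) ((1 - r_st alpha t s)^-1 *: ('X - (r_st alpha t s)%:P)).

From HB Require Import structures.
From mathcomp Require Import all_boot all_order all_algebra.
From mathcomp Require Import all_classical all_reals all_analysis.
From mathcomp Require Import ring lra.
Import Order.TTheory GRing.Theory Num.Theory numFieldNormedType.Exports.
Local Open Scope ring_scope.

(* Let c = cos (pi / 2t) and a = alpha / (1 + c). Up to the affine change of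
   variable x = a (cos phi + c), the monic polynomial pstar with roots r_{s,t} is the
   Chebyshev polynomial T_t: pstar (a (cos phi + c)) = pstar(alpha) cos (t phi).
   Hence |pstar| <= |pstar(alpha)| on [0, alpha], pstar(0) = 0, pstar is positive and
   increasing on [beta, +oo), and pstar takes the values pstar(alpha) (-1)^j at the t
   nodes a (cos (j pi / t) + c) of (0, alpha].
   Equioscillation: if g has degree <= t, g(0) = 0 and |g| <= M at the nodes, then
   |g(beta)| |pstar(alpha)| <= M pstar(beta). Otherwise k pstar - g with
   k = g(beta) / pstar(beta) vanishes at 0 and beta and changes sign between
   consecutive nodes, so it has t + 1 roots, hence is 0, and then
   |g(alpha)| = |k pstar(alpha)| > M.
   Thus every admissible f has objective at least |pstar(alpha)| / pstar(beta), which
   bounds the objective of fstar = pstar / pstar(1) from above. *)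


Section Equioscillation.
Variable R : realType.
Implicit Types (p : {poly R}) (a b : R).

Lemma poly_root_between p a b : a < b -> p.[a] * p.[b] < 0 ->
  exists2 z, a < z < b & root p z.
Proof.
move=> ab pab.
have p_cont : {within `[a, b], continuous (horner p)}%classic.
  by apply/continuous_subspaceT => x; exact: continuous_horner.
have [|z zab pz] := IVT (ltW ab) p_cont (v := 0).
  by rewrite ge_min le_max; case: (ltrgt0P p.[a]) pab; case: (ltrgt0P p.[b]);
    nra.
exists z; last by rewrite /root pz.
move: zab; rewrite in_itv /= !lt_neqAle => /andP[-> ->]; rewrite !andbT.
apply/andP; split; apply/eqP => ez; move: pab.
  by rewrite ez pz mul0r ltxx.
by rewrite -ez pz mulr0 ltxx.
Qed.

Section Nodes.
Variables (mu : nat -> R) (n : nat).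
Hypothesis mu_decr : forall j, (j < n)%N -> mu j.+1 < mu j.

Lemma nodes_le_first j : (j <= n)%N -> mu j <= mu 0.
Proof.
elim: j => // j IHj jn.
exact: le_trans (ltW (mu_decr _ jn)) (IHj (ltnW jn)).
Qed.

Lemma sign_changes_roots p : (forall j, (j < n)%N -> p.[mu j.+1] * p.[mu j] < 0) ->
  exists s : seq R,
    [/\ size s = n, uniq s, all (root p) s & all (fun z => mu n < z <= mu 0) s].
Proof.
move=> sgn; suff : forall m, (m <= n)%N -> exists s : seq R,
    [/\ size s = m, uniq s, all (root p) s & all (fun z => mu m < z <= mu 0) s].
  by apply.
elim=> [|m IHm] mn; first by exists [::].
have [s [sm us rs bs]] := IHm (ltnW mn).
have [z /andP[z1 z2] pz] := @poly_root_between p _ _ (mu_decr _ mn) (sgn _ mn).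
have lt_z_s y : y \in s -> z < y.
  by move=> ys; have /andP[y1 _] := allP bs y ys; exact: lt_trans y1.
exists (z :: s); split => /=.
- by rewrite sm.
- by rewrite us andbT; apply/negP => /lt_z_s; rewrite ltxx.
- by rewrite pz rs.
rewrite z1 (le_trans (ltW z2) (nodes_le_first _ (ltnW mn))) /=.
apply/allP => y ys; have /andP[y1 ->] := allP bs y ys.
by rewrite (lt_trans (mu_decr _ mn) y1).
Qed.

Lemma poly_eq0_sign_changes p a b : (size p <= n.+2)%N -> root p a -> root p b ->
  a < mu n -> mu 0 < b -> (forall j, (j < n)%N -> p.[mu j.+1] * p.[mu j] < 0) ->
  p = 0.
Proof.
move=> sp pa pb an b0 sgn; apply/eqP; apply: contraT => p0.
have [s [sn us rs bs]] := sign_changes_roots p sgn.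
have a_notin : a \notin s.
  by apply/negP => /(allP bs) /andP[/(lt_trans an)]; rewrite ltxx.
have b_notin : b \notin s.
  by apply/negP => /(allP bs) /andP[_ /(lt_le_trans b0)]; rewrite ltxx.
have ab : a != b.
  by rewrite lt_eqF // (lt_trans an) // (le_lt_trans (nodes_le_first n (leqnn n)) b0).
have := max_poly_roots p0 (rs := [:: a, b & s]).
rewrite /= pa pb rs in_cons negb_or ab a_notin b_notin us sn => /(_ isT isT).
by rewrite ltnNge sp.
Qed.

Lemma equioscillation_bound (P g : {poly R}) a b (A M : R) :
  (size P <= n.+2)%N -> (size g <= n.+2)%N -> root P a -> root g a ->
  a < mu n -> mu 0 < b -> P.[b] != 0 ->
  (forall j, (j <= n)%N -> P.[mu j] = A * (-1) ^+ j) ->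
  (forall j, (j <= n)%N -> `|g.[mu j]| <= M) ->
  `|g.[b]| * `|A| <= M * `|P.[b]|.
Proof.
move=> sP sg Pa ga an b0 Pb0 Pmu gM; rewrite leNgt; apply/negP => gb_big.
set k := g.[b] / P.[b].
have M_lt : M < `|k * A|.
  by rewrite normrM normf_div mulrAC ltr_pdivlMr ?normr_gt0.
have g_lt j : (j <= n)%N -> `|g.[mu j]| < `|k * A|.
  by move=> jn; exact: le_lt_trans (gM _ jn) M_lt.
set H := k *: P - g.
have Hmu j : (j <= n)%N -> H.[mu j] = k * A * (-1) ^+ j - g.[mu j].
  by move=> jn; rewrite /H hornerD hornerN hornerZ Pmu // mulrA.
have opposite_signs (e x y : R) : `|x| < `|e| -> `|y| < `|e| ->
    (- e - y) * (e - x) < 0.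
  move=> /ltr_normlP[x1 x2] /ltr_normlP[y1 y2].
  case: (lerP 0 e) => e0.
    by rewrite ger0_norm // in x1 x2 y1 y2; nra.
  by rewrite ltr0_norm // in x1 x2 y1 y2; nra.
have H0 : H = 0.
  apply: (@poly_eq0_sign_changes H a b) => // [|||j jn].
  - by rewrite (leq_trans (size_polyD _ _)) // size_polyN geq_max sg
      (leq_trans (size_scale_leq _ _)).
  - by rewrite /root /H hornerD hornerN hornerZ (eqP Pa) (eqP ga) mulr0 subrr.
  - by rewrite /root /H hornerD hornerN hornerZ /k divfK // subrr.
  rewrite !Hmu ?(ltnW jn) // exprS mulN1r mulrN.
  by apply: opposite_signs; rewrite normrM normr_sign mulr1 g_lt // ltnW.
have := Hmu 0%N isT; rewrite H0 horner0 expr0 mulr1 => /eqP.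
rewrite eq_sym subr_eq0 => /eqP gmu0.
by have := g_lt 0%N isT; rewrite gmu0 ltxx.
Qed.

End Nodes.
End Equioscillation.

Section ExtremaOnInterval.
Variable R : realType.
Implicit Types (f : {poly R}) (a b x : R).

Lemma poly_norm_bounded_itv f a b :
  exists c, forall x, a <= x <= b -> `|f.[x]| <= c.
Proof.
exists (\sum_(i < size f) `|f`_i| * (`|a| + `|b|) ^+ i) => x /andP[ax xb].
rewrite horner_coef (le_trans (ler_norm_sum _ _ _)) //.
apply: ler_sum => i _; rewrite normrM normrX ler_wpM2l ?lerXn2r ?nnegrE //.
have := ler_norm b; have := ler_norm (- a); rewrite normrN => Na Nb.
by rewrite ler_norml; apply/andP; split; have := normr_ge0 a;
  have := normr_ge0 b; lra.
Qed.

Lemma max_abs_on_ge f a b x : a <= x <= b -> `|f.[x]| <= max_abs_on f a b.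
Proof.
move=> axb; apply: ub_le_sup; last by exists x; rewrite ?in_itv.
have [c fc] := poly_norm_bounded_itv f a b.
by exists c => _ [y ayb <-]; apply: fc; move: ayb => /=; rewrite in_itv.
Qed.

Lemma max_abs_on_le f a b M : a <= b ->
  (forall x, a <= x <= b -> `|f.[x]| <= M) -> max_abs_on f a b <= M.
Proof.
move=> ab fM; apply: ge_sup.
  by exists `|f.[a]|, a => //=; rewrite in_itv /= lexx ab.
by move=> _ [y ayb <-]; apply: fM; move: ayb => /=; rewrite in_itv.
Qed.

Lemma min_abs_on_le f a b x : a <= x <= b -> min_abs_on f a b <= `|f.[x]|.
Proof.
move=> axb; apply: ge_inf; last by exists x; rewrite ?in_itv.
by exists 0 => _ [y _ <-].
Qed.

Lemma min_abs_on_ge f a b m : a <= b ->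
  (forall x, a <= x <= b -> m <= `|f.[x]|) -> m <= min_abs_on f a b.
Proof.
move=> ab fm; apply: lb_le_inf.
  by exists `|f.[a]|, a => //=; rewrite in_itv /= lexx ab.
by move=> _ [y ayb <-]; apply: fm; move: ayb => /=; rewrite in_itv.
Qed.

End ExtremaOnInterval.

Section Chebyshev.
Variable R : realType.

Fixpoint cheb_pair (n : nat) : {poly R} * {poly R} :=
  if n is m.+1 then ((cheb_pair m).2, 'X * (cheb_pair m).2 *+ 2 - (cheb_pair m).1)
  else (1, 'X).

Definition cheb (n : nat) : {poly R} := (cheb_pair n).1.

Lemma cheb_cos n x : (cheb n).[cos x] = cos (n%:R * x).
Proof.
suff [] : (cheb_pair n).1.[cos x] = cos (n%:R * x) /\
          (cheb_pair n).2.[cos x] = cos (n.+1%:R * x) by [].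
elim: n => [|n [IH1 IH2]] /=; first by rewrite hornerC mul0r cos0 hornerX mul1r.
split=> //; rewrite hornerD hornerN hornerMn hornerM hornerX IH1 IH2.
have -> : n.+2%:R * x = n.+1%:R * x + x by rewrite -[in LHS]addn1 natrD mulrDl mul1r.
have -> : n%:R * x = n.+1%:R * x - x by rewrite -addn1 natrD mulrDl mul1r addrK.
rewrite cosB cosD mulr2n; lra.
Qed.

Lemma size_cheb n : (size (cheb n) <= n.+1)%N.
Proof.
suff [] : (size (cheb_pair n).1 <= n.+1)%N /\ (size (cheb_pair n).2 <= n.+2)%N by [].
elim: n => [|n [IH1 IH2]] /=; first by rewrite size_polyC size_polyX oner_neq0.
split=> //; rewrite (leq_trans (size_polyD _ _)) // geq_max size_polyN.
apply/andP; split; last by rewrite (leq_trans IH1) // leqW.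
rewrite -scaler_nat (leq_trans (size_scale_leq _ _)) //.
by rewrite (leq_trans (size_polyMleq _ _)) // size_polyX add2n.
Qed.

Lemma cheb_neq0 n : cheb n != 0.
Proof.
apply/eqP => c0; have := cheb_cos n 0.
by rewrite c0 horner0 mulr0 cos0 => /eqP; rewrite eq_sym oner_eq0.
Qed.

Definition cheb_angle (t i : nat) : R := pi * (i%:R + 2^-1) / t%:R.

Lemma cheb_angle_in (t i : nat) : (i < t)%N -> 0 < cheb_angle t i < pi.
Proof.
move=> it; have t0 : 0 < t%:R :> R by rewrite ltr0n (leq_ltn_trans _ it).
have it' : i%:R + 1 <= t%:R :> R by rewrite natr1 ler_nat.
have := @pi_gt0 R; have : 0 <= i%:R :> R by []; move=> i0 p0.
by rewrite divr_gt0 ?mulr_gt0 /= ?ltr_pdivrMr //=; nra.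
Qed.

Lemma root_cheb_cos_angle (t i : nat) :
  (i < t)%N -> root (cheb t) (cos (cheb_angle t i)).
Proof.
move=> it; have t0 : t%:R != 0 :> R by rewrite pnatr_eq0 -lt0n (leq_ltn_trans _ it).
rewrite /root cheb_cos /cheb_angle mulrC divfK // mulrDr.
have -> : pi * i%:R + pi * 2^-1 = pi / 2 + pi *+ i :> R by rewrite mulr_natr addrC.
by rewrite (alternatingn (@cosDpi R)) cos_pihalf mulr0.
Qed.

(* The [t] values [cos (cheb_angle t i)] are distinct roots of [cheb t],
   which has degree <= [t]. *)
Lemma prod_cos_sub_cheb_angle (t : nat) : exists k : R, forall phi,
  \prod_(i < t) (cos phi - cos (cheb_angle t i)) = k * cos (t%:R * phi).
Proof.
set rs := [seq cos (cheb_angle t i) | i <- iota 0 t].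
have rs_roots : all (root (cheb t)) rs.
  apply/allP => z /mapP[i]; rewrite mem_iota add0n => it ->.
  exact: root_cheb_cos_angle.
have rs_uniq : uniq_roots rs.
  rewrite uniq_rootsE map_inj_in_uniq ?iota_uniq // => i j.
  rewrite !mem_iota !add0n /= => it jt.
  have /andP[i0 ipi] := cheb_angle_in t i it.
  have /andP[j0 jpi] := cheb_angle_in t j jt.
  move/cos_inj; rewrite !in_itv /= !ltW // => /(_ isT isT).
  have t0 : t%:R != 0 :> R by rewrite pnatr_eq0 -lt0n (leq_ltn_trans _ jt).
  rewrite /cheb_angle => /(mulIf (invr_neq0 t0)) /(mulfI (lt0r_neq0 (@pi_gt0 R))).
  by move/addIr/eqP; rewrite eqr_nat => /eqP.
have [q cheb_eq] := uniq_roots_prod_XsubC rs_roots rs_uniq.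
set Q := \prod_(z <- rs) ('X - z%:P) in cheb_eq.
have Q_monic : Q \is monic by apply: monic_prod_XsubC.
have size_Q : size Q = t.+1 by rewrite size_prod_XsubC size_map size_iota.
have q0 : q != 0 by apply: contraNneq (cheb_neq0 t) => q0; rewrite cheb_eq q0 mul0r.
have size_q : (size q <= 1)%N.
  have := size_cheb t; rewrite cheb_eq (size_mul q0 (monic_neq0 Q_monic)) size_Q.
  by rewrite addnS /= -add1n leq_add2r.
exists (q`_0)^-1 => phi.
have q00 : q`_0 != 0 by apply: contraNneq q0 => e; rewrite (size1_polyC size_q) e.
rewrite -cheb_cos cheb_eq (size1_polyC size_q) hornerCM coefC /= mulKf //.
rewrite horner_prod big_map -(big_mkord xpredT (fun i => cos phi - cos (cheb_angle t i))).
by rewrite /index_iota subn0; apply: eq_bigr => i _; rewrite hornerXsubC.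
Qed.

End Chebyshev.

Arguments cheb {R}.
Arguments cheb_angle {R}.

Section ChebyshevOptimal.
Variables (R : realType) (alpha beta : R) (t : nat).
Hypotheses (alpha_gt0 : 0 < alpha) (alpha_lt_beta : alpha < beta) (beta_lt1 : beta < 1)
  (t_gt0 : (0 < t)%N).

Let c : R := cos (pi / (2 * t%:R)).
Let a : R := alpha / (1 + c).
Let u : R := pi / t%:R.

Let tR_gt0 : 0 < t%:R :> R. Proof. by rewrite ltr0n. Qed.
Let u_gt0 : 0 < u. Proof. by rewrite divr_gt0 ?pi_gt0. Qed.
Let pi_eq : pi = t%:R * u. Proof. by rewrite /u mulrC divfK ?lt0r_neq0. Qed.

Let half_u : pi / (2 * t%:R) = u / 2.
Proof. by rewrite /u invfM mulrCA mulrC. Qed.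

Let c_ge0 : 0 <= c.
Proof.
have u_le_pi : u <= pi by rewrite pi_eq ler_peMl ?ler1n // ltW.
by apply: cos_ge0_pihalf; rewrite half_u; have := u_gt0; lra.
Qed.

Let c_le1 : c <= 1. Proof. exact: cos_le1. Qed.
Let a_gt0 : 0 < a. Proof. by rewrite divr_gt0 //; have := c_ge0; lra. Qed.
Let a_one_c : a * (1 + c) = alpha.
Proof. by rewrite /a divfK //; apply: lt0r_neq0; have := c_ge0; lra. Qed.

Let cos_pi_sub : cos (pi - u / 2) = - c.
Proof. by rewrite addrC cosDpi cosN /c half_u. Qed.

Let r_stE s : r_st alpha t s = a * (cos (cheb_angle t s) + c).
Proof. by rewrite /r_st mulrAC. Qed.

Lemma r_st_le_alpha s : r_st alpha t s <= alpha.
Proof. by rewrite r_stE -a_one_c ler_pM2l // lerD2r cos_le1. Qed.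

Definition pstar : {poly R} := \prod_(s < t) ('X - (r_st alpha t s)%:P).

Lemma size_pstar : size pstar = t.+1.
Proof. by rewrite size_prod_XsubC [index_enum _]unlock -enumT size_enum_ord. Qed.

Lemma pstar_cos phi : pstar.[a * (cos phi + c)] = pstar.[alpha] * cos (t%:R * phi).
Proof.
have [k prod_k] := prod_cos_sub_cheb_angle R t.
have pstarE psi : pstar.[a * (cos psi + c)] = a ^+ t * k * cos (t%:R * psi).
  rewrite horner_prod -mulrA -prod_k -[t in a ^+ t]card_ord -prodr_const -big_split.
  by apply: eq_bigr => i _; rewrite /= hornerXsubC r_stE -mulrBr; ring.
by rewrite pstarE -[alpha]a_one_c -cos0 pstarE mulr0 cos0 mulr1.
Qed.

Lemma pstar_root0 : pstar.[0] = 0.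
Proof.
have zero_eq : a * (cos (pi - u / 2) + c) = 0 by rewrite cos_pi_sub addNr mulr0.
rewrite -{1}zero_eq pstar_cos.
have -> : t%:R * (pi - u / 2) = - (pi / 2) + pi *+ t.
  by rewrite -mulr_natl pi_eq; ring.
by rewrite (alternatingn (@cosDpi R)) cosN cos_pihalf !mulr0.
Qed.

Lemma pstar_abs_le x : 0 <= x <= alpha -> `|pstar.[x]| <= `|pstar.[alpha]|.
Proof.
move=> /andP[x0 xa]; have c0 := c_ge0; have c1 := c_le1.
have xa_le : x / a <= 1 + c by rewrite ler_pdivrMr // mulrC a_one_c.
have xa_ge0 : 0 <= x / a by rewrite divr_ge0 // ltW.
have y_in : x / a - c \in `[-1, 1] by rewrite in_itv /=; apply/andP; split; lra.
have -> : x = a * (cos (acos (x / a - c)) + c).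
  by rewrite acosK // subrK mulrC divfK ?lt0r_neq0.
by rewrite pstar_cos normrM ler_piMr // cos_max.
Qed.

Definition cheb_node (j : nat) : R := a * (cos (j%:R * u) + c).

Lemma pstar_cheb_node j : pstar.[cheb_node j] = pstar.[alpha] * (-1) ^+ j.
Proof.
rewrite pstar_cos mulrCA -pi_eq mulr_natl -[pi *+ j]add0r.
by rewrite (alternatingn (@cosDpi R)) cos0 mulr1.
Qed.

Lemma cheb_node0 : cheb_node 0 = alpha.
Proof. by rewrite /cheb_node mul0r cos0. Qed.

Let angle_in j : (j <= t)%N -> j%:R * u \in `[0, pi].
Proof.
move=> jt; rewrite in_itv /= mulr_ge0 ?(ltW u_gt0) // pi_eq ler_pM2r //.
by rewrite ler_nat.
Qed.

Lemma cheb_node_decr j : (j.+1 < t)%N -> cheb_node j.+1 < cheb_node j.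
Proof.
move=> jt; have jt' := ltnW jt.
rewrite ltr_pM2l // ltrD2r ltr_cos ?angle_in ?(ltnW jt') //.
by rewrite ltr_pM2r // ltr_nat ltnSn.
Qed.

Lemma cheb_node_gt0 j : (j < t)%N -> 0 < cheb_node j.
Proof.
move=> jt; rewrite mulr_gt0 // -[c]opprK -cos_pi_sub subr_gt0.
have j1 : j%:R + 1 <= t%:R :> R by rewrite natr1 ler_nat.
have u0 := u_gt0; have t1 : 1 <= t%:R :> R by rewrite ler1n.
have pi_in : pi - u / 2 \in `[0, pi].
  by rewrite in_itv /= pi_eq; apply/andP; split; nra.
by rewrite ltr_cos ?angle_in ?(ltnW jt) // pi_eq; nra.
Qed.

Lemma cheb_node_le_alpha j : cheb_node j <= alpha.
Proof. by rewrite -a_one_c ler_pM2l // lerD2r cos_le1. Qed.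

Lemma pstar_beta_gt0 : 0 < pstar.[beta].
Proof.
rewrite horner_prod; apply: prodr_gt0 => s _.
by rewrite hornerXsubC subr_gt0 (le_lt_trans (r_st_le_alpha s)).
Qed.

Lemma pstar_ge_beta x : beta <= x -> pstar.[beta] <= pstar.[x].
Proof.
move=> bx; rewrite !horner_prod; apply: ler_prod => s _.
have rb : r_st alpha t s <= beta := le_trans (r_st_le_alpha s) (ltW alpha_lt_beta).
by rewrite !hornerXsubC subr_ge0 rb lerD2r.
Qed.

Lemma fstarE : fstar alpha t = (pstar.[1])^-1 *: pstar.
Proof.
rewrite /fstar scaler_prod horner_prod prodfV; congr (_^-1 *: _).
by apply: eq_bigr => s _; rewrite hornerXsubC.
Qed.

Let pstar1_gt0 : 0 < pstar.[1].
Proof. exact: lt_le_trans pstar_beta_gt0 (pstar_ge_beta 1 (ltW beta_lt1)). Qed.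

Lemma Pt'_fstar : Pt' t (fstar alpha t).
Proof.
rewrite fstarE; split; [|split].
- by rewrite (leq_trans (size_scale_leq _ _)) // size_pstar.
- by rewrite hornerZ pstar_root0 mulr0.
- by rewrite hornerZ mulVf // lt0r_neq0.
Qed.

Lemma objective_fstar_le :
  (objective alpha beta (fstar alpha t) <= (`|pstar.[alpha]| / pstar.[beta])%:E)%E.
Proof.
set K := pstar.[1]^-1; have K_gt0 : 0 < K by rewrite invr_gt0.
have Pb := pstar_beta_gt0.
have fstar_horner x : (fstar alpha t).[x] = K * pstar.[x] by rewrite fstarE hornerZ.
have max_le : max_abs_on (fstar alpha t) 0 alpha <= K * `|pstar.[alpha]|.
  apply: max_abs_on_le => [|x x0a]; first exact: ltW.
  by rewrite fstar_horner normrM gtr0_norm // ler_pM2l // pstar_abs_le.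
have min_ge : K * pstar.[beta] <= min_abs_on (fstar alpha t) beta 1.
  apply: min_abs_on_ge => [|x /andP[bx _]]; first exact: ltW.
  rewrite fstar_horner normrM gtr0_norm // ler_pM2l //.
  exact: le_trans (pstar_ge_beta x bx) (ler_norm _).
have min_gt0 : 0 < min_abs_on (fstar alpha t) beta 1.
  exact: lt_le_trans (mulr_gt0 K_gt0 Pb) min_ge.
rewrite /objective (negbTE (lt0r_neq0 min_gt0)) lee_fin ler_pdivrMr //.
apply: (le_trans max_le); have -> : K * `|pstar.[alpha]| =
    `|pstar.[alpha]| / pstar.[beta] * (K * pstar.[beta]) by field; rewrite lt0r_neq0.
by rewrite ler_wpM2l // divr_ge0 // ltW.
Qed.

Lemma objective_ge f : Pt' t f ->
  ((`|pstar.[alpha]| / pstar.[beta])%:E <= objective alpha beta f)%E.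
Proof.
move=> [size_f [f0 _]]; rewrite /objective; case: ifPn => [_|mf0]; first exact: leey.
rewrite lee_fin; set Mf := max_abs_on f 0 alpha; set mf := min_abs_on f beta 1.
have Pb := pstar_beta_gt0.
have mf_gt0 : 0 < mf.
  by rewrite lt0r mf0; apply: min_abs_on_ge => [|x _]; [exact: ltW | exact: normr_ge0].
have mf_le : mf <= `|f.[beta]| by apply: min_abs_on_le; rewrite lexx ltW.
have bound : `|f.[beta]| * `|pstar.[alpha]| <= Mf * `|pstar.[beta]|.
  apply: (@equioscillation_bound R cheb_node t.-1 _ pstar f 0 beta) => //.
  - by move=> j; rewrite -ltnS prednK //; exact: cheb_node_decr.
  - by rewrite prednK // size_pstar.
  - by rewrite prednK.
  - by rewrite /root pstar_root0.
  - by rewrite /root f0.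
  - by apply: cheb_node_gt0; rewrite prednK.
  - by rewrite cheb_node0.
  - by rewrite lt0r_neq0.
  - by move=> j _; exact: pstar_cheb_node.
  move=> j jt; apply: max_abs_on_ge; rewrite cheb_node_le_alpha andbT ltW //.
  by apply: cheb_node_gt0; rewrite -ltnS prednK in jt.
rewrite (gtr0_norm Pb) in bound.
rewrite ler_pdivlMr // mulrAC ler_pdivrMr //.
by apply: le_trans bound; rewrite mulrC ler_wpM2r.
Qed.

End ChebyshevOptimal.

Arguments Pt'_fstar {R alpha beta t}.
Arguments objective_fstar_le {R alpha beta t}.
Arguments objective_ge {R alpha beta t}.

Theorem theorem1 (R : realType) (alpha beta : R) (t : nat)
  (h0a : 0 < alpha) (hab : alpha < beta) (hb1 : beta < 1) (ht : (1 <= t)%N) :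
  Pt' t (fstar alpha t) /\
  (forall f : {poly R}, Pt' t f ->
     (objective alpha beta (fstar alpha t) <= objective alpha beta f)%E).
Proof.
split; first exact: Pt'_fstar h0a hab hb1 ht.
move=> f f_adm; apply: le_trans (objective_fstar_le h0a hab hb1 ht) _.
exact: objective_ge h0a hab hb1 ht f f_adm.
Qed.
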